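(* Let $n\ge 1$, $\lambda_s>0$, $\lambda>0$ and let $n_0\ge 2$. In the line network $L(n_0)$ (with parameter $n$), for every integer $i$ with $1\le i\le \frac{n_0}{2}$ we have $$\Delta^{\ell(n_0)}_{i+1}\le \Delta^{\ell(n_0)}_{i}.$$
   Context: Version-age model. A gossip network on a finite node set $\mathcal N$ is specified by source rates $\lambda_{0j}>0$ ($j\in\mathcal N$) and gossip rates $\lambda_{ij}\ge 0$ for ordered pairs $i\neq j$ in $\mathcal N$ ($\lambda_{ij}$ is the rate at which node $i$ sends updates to node $j$); $\lambda_s>0$ is the source's own update rate. For nonempty $S\subseteq\mathcal N$ let $N(S)=\{i\in\mathcal N\setminus S:\ \sum_{j\in S}\lambda_{ij}>0\}$. The version ages $\Delta_S$ ($\emptyset\neq S\subseteq\mathcal N$) are the numbers defined by $$\Delta_S=\frac{\lambda_s+\sum_{i\in N(S)}\big(\sum_{j\in S}\lambda_{ij}\big)\Delta_{S\cup\{i\}}}{\sum_{j\in S}\lambda_{0j}+\sum_{i\in N(S)}\sum_{j\in S}\lambda_{ij}},$$ which is well defined by downward induction on $|S|$ (all sets on the right are strictly larger than $S$). Write $\Delta_i=\Delta_{\{i\}}$. Line network $L(n_0)$ with parameter $n$: node set $\{1,\dots,n_0\}$, $\lambda_{0j}=\lambda/n$ for all $j$, $\lambda_{i,i+1}=\lambda_{i+1,i}=\lambda/2$ for $1\le i\le n_0-1$, and all other $\lambda_{ij}=0$. $\Delta^{\ell(n_0)}_i$ denotes $\Delta_i$ in this network. *)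

From HB Require Import structures.
From mathcomp Require Import all_boot all_order all_algebra.
Set Implicit Arguments. Unset Strict Implicit. Unset Printing Implicit Defensive.
Import Order.TTheory GRing.Theory Num.Theory.
Local Open Scope ring_scope.

(* A gossip network on a finite node set T over an ordered field R:
   lam0 j  = source rate lambda_{0j}, lamg i j = gossip rate lambda_{ij},
   lams    = source update rate lambda_s. *)
Section VersionAge.
Variables (R : realFieldType) (T : finType).
Variables (lams : R) (lam0 : T -> R) (lamg : T -> T -> R).

Definition rate_into (S : {set T}) (i : T) : R := \sum_(j in S) lamg i j.

Definition nbr (S : {set T}) : {set T} :=
  [set i | (i \notin S) && (0 < rate_into S i)].

Fixpoint age_fuel (k : nat) (S : {set T}) : R :=
  match k with
  | 0%N => 0
  | k'.+1 =>
      (lams + \sum_(i in nbr S) rate_into S i * age_fuel k' (i |: S)) /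
      (\sum_(j in S) lam0 j + \sum_(i in nbr S) rate_into S i)
  end.

(* Version age Delta_S: fuel #|T| - #|S| + 1 suffices, since each recursive
   call goes to a set one element larger, and N(T) is empty. *)
Definition version_age (S : {set T}) : R := age_fuel (#|T| - #|S|).+1 S.
End VersionAge.

(* Line network L(n0) with parameter n; node k (1-indexed) is the ordinal k-1. *)
Definition line_lam0 (R : realFieldType) (n n0 : nat) (lam : R) : 'I_n0 -> R :=
  fun _ => lam / n%:R.
Definition line_lamg (R : realFieldType) (n0 : nat) (lam : R) : 'I_n0 -> 'I_n0 -> R :=
  fun i j => if ((i : nat).+1 == j) || ((j : nat).+1 == i) then lam / 2 else 0.

Definition line_age (R : realFieldType) (n n0 : nat) (lams lam : R) (i : 'I_n0) : R :=
  version_age lams (line_lam0 n lam) (line_lamg lam) [set i].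

From HB Require Import structures.
From mathcomp Require Import all_boot all_order all_algebra.
From mathcomp Require Import zify lra.
Set Implicit Arguments. Unset Strict Implicit. Unset Printing Implicit Defensive.
Import Order.TTheory GRing.Theory Num.Theory.
Local Open Scope ring_scope.

(* From a single node, gossip in a line only ever reaches segments of
   consecutive nodes, so the version ages that matter are those of segments.
   We index a segment by the numbers (a, b) of nodes lying outside it to the
   left and to the right; its age h a b then satisfies a two-dimensional
   recursion (out_rate a b) * h a b = lams + w h(a-1, b) + w h(a, b-1). *)

Lemma le_common_equation (R : numFieldType) (q w x y0 y1 z0 z1 : R) :
  0 < q -> 0 <= w -> z1 * q = x + w * y1 -> z0 * q = x + w * y0 ->
  y1 <= y0 -> z1 <= z0.
Proof.
move=> q_gt0 w_ge0 e1 e0 le_y.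
by rewrite -(ler_pM2r q_gt0) e1 e0 lerD2l ler_wpM2l.
Qed.

Section SegmentRecursion.
Variables (R : realFieldType) (N : nat) (c w lams : R) (h : nat -> nat -> R).
Hypotheses (c_gt0 : 0 < c) (w_gt0 : 0 < w) (lams_gt0 : 0 < lams).

(* Total rate out of the equation for a segment with a and b outside nodes:
   source updates into its N - (a + b) nodes, plus gossip from each of its
   (at most two) outside neighbours. *)
Definition out_rate (a b : nat) : R :=
  (N - (a + b))%:R * c + (if (0 < a)%N then w else 0) + (if (0 < b)%N then w else 0).

(* h a b: the age of a segment with a outside nodes on the left, b on the right. *)
Hypothesis h_rec : forall a b, (a + b < N)%N ->
  h a b * out_rate a b =
  lams + (if (0 < a)%N then w * h a.-1 b else 0) + (if (0 < b)%N then w * h a b.-1 else 0).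

Lemma out_rate_gt0 a b : (a + b < N)%N -> 0 < out_rate a b.
Proof.
move=> ab_lt; have Nc_gt0 : 0 < (N - (a + b))%:R * c by rewrite mulr_gt0 // ltr0n subn_gt0.
have w_ge0 := ltW w_gt0.
by rewrite /out_rate; case: (0 < a)%N; case: (0 < b)%N; lra.
Qed.

Lemma out_rate_sym a b : out_rate a b = out_rate b a.
Proof. by rewrite /out_rate addnC addrAC. Qed.

(* Reflecting the line exchanges the two outside counts. *)
Lemma h_sym a b : (a + b < N)%N -> h a b = h b a.
Proof.
have [k] := ubnP (a + b); elim: k => // k IH in a b *; rewrite ltnS => ab_le ab_lt.
apply: (mulIf (lt0r_neq0 (out_rate_gt0 ab_lt))).
rewrite h_rec // out_rate_sym h_rec; last by rewrite addnC.
rewrite [RHS]addrAC.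
congr (_ + _ + _).
- by case: a => //= a in ab_le ab_lt *; rewrite IH //; lia.
- by case: b => //= b in ab_le ab_lt *; rewrite IH //; lia.
Qed.

Lemma h_gt0 a b : (a + b < N)%N -> 0 < h a b.
Proof.
have [k] := ubnP (a + b); elim: k => // k IH in a b *; rewrite ltnS => ab_le ab_lt.
rewrite -(pmulr_lgt0 _ (out_rate_gt0 ab_lt)) h_rec //.
have left_ge0 : 0 <= if (0 < a)%N then w * h a.-1 b else 0.
  by case: a => //= a in ab_le ab_lt *; rewrite mulr_ge0 ?ltW ?IH //; lia.
have right_ge0 : 0 <= if (0 < b)%N then w * h a b.-1 else 0.
  by case: b => //= b in ab_le ab_lt left_ge0 *; rewrite mulr_ge0 ?ltW ?IH //; lia.
by rewrite !ltr_wpDr.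
Qed.

Lemma h_incr_left a b : (a.+1 + b < N)%N ->
  out_rate a.+1 b * (h a.+1 b - h a b) =
  c * h a b + (if (0 < a)%N then w * (h a b - h a.-1 b) else 0)
            + (if (0 < b)%N then w * (h a.+1 b.-1 - h a b.-1) else 0).
Proof.
move=> ab_lt; have e1 := h_rec ab_lt; have e0 := h_rec (ltnW ab_lt).
have rate_shift : out_rate a b = out_rate a.+1 b + c - w + (if (0 < a)%N then w else 0).
  rewrite /out_rate; have -> : (N - (a + b) = (N - (a.+1 + b)).+1)%N by lia.
  rewrite -natr1 /=; move: (N - _)%N%:R => K.
  by case: (0 < a)%N; lra.
move: e1 e0; rewrite rate_shift; move: (out_rate a.+1 b) => q.
by case: (0 < a)%N; case: (0 < b)%N => /=; lra.
Qed.

(* A larger segment is refreshed sooner: h grows with the outside counts. *)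
Lemma h_mono_left a b : (a.+1 + b < N)%N -> h a b <= h a.+1 b.
Proof.
have [k] := ubnP (a + b); elim: k => // k IH in a b *; rewrite ltnS => ab_le ab_lt.
rewrite -subr_ge0 -(pmulr_rge0 _ (out_rate_gt0 ab_lt)) h_incr_left //.
have h_ge0 : 0 <= c * h a b by rewrite mulr_ge0 ?ltW ?h_gt0 //; lia.
have left_ge0 : 0 <= if (0 < a)%N then w * (h a b - h a.-1 b) else 0.
  by case: a => //= a in ab_le ab_lt h_ge0 *; rewrite mulr_ge0 ?(ltW w_gt0) // subr_ge0 IH //; lia.
have right_ge0 : 0 <= if (0 < b)%N then w * (h a.+1 b.-1 - h a b.-1) else 0.
  by case: b => //= b in ab_le ab_lt h_ge0 left_ge0 *; rewrite mulr_ge0 ?(ltW w_gt0) // subr_ge0 IH //; lia.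
lra.
Qed.

Lemma h_mono_right a b : (a + b.+1 < N)%N -> h a b <= h a b.+1.
Proof.
move=> ab_lt; rewrite h_sym ?[h a b.+1]h_sym //; last by lia.
by apply: h_mono_left; lia.
Qed.

Lemma h_center a b : (a < b)%N -> (a + b < N)%N -> h a.+1 b.-1 <= h a b.
Proof.
have [k] := ubnP (a + b); elim: k => // k IH in a b *; rewrite ltnS => ab_le lt_ab ab_lt.
case: b => [|b] //= in ab_le lt_ab ab_lt *.
have [eq_ab|{}lt_ab] : a = b \/ (a < b)%N by lia.
  by rewrite eq_ab h_sym ?lexx //; lia.
have e1 := h_rec (_ : (a.+1 + b < N)%N); have e0 := h_rec ab_lt.
have b_gt0 : (0 < b)%N by lia.
move: e1 e0 => /(_ ltac:(lia)); rewrite /= b_gt0 => e1 e0.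
case: a => [|a] /= in ab_le lt_ab ab_lt e1 e0 *.
- have rate_eq : out_rate 1 b = out_rate 0 b.+1 + w.
    by rewrite /out_rate b_gt0 /= add1n add0n addr0.
  have e0' : h 0 b.+1 * (out_rate 0 b.+1 + w) = lams + w * h 0 b + w * h 0 b.+1.
    by rewrite mulrDr e0 addr0 [h 0 b.+1 * w]mulrC.
  rewrite rate_eq in e1.
  have q_gt0 : 0 < out_rate 0 b.+1 + w by rewrite addr_gt0 ?out_rate_gt0.
  apply: (le_common_equation q_gt0 (ltW w_gt0) e1 e0').
  apply: (@le_trans _ _ (h 0 b)); first by apply: IH; lia.
  by apply: h_mono_right; lia.
- have rate_eq : out_rate a.+2 b = out_rate a.+1 b.+1.
    by rewrite /out_rate b_gt0 addSnnS.
  rewrite rate_eq in e1; rewrite addrAC in e0.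
  apply: (le_common_equation (out_rate_gt0 ab_lt) (ltW w_gt0) e1 e0).
  apply: (@le_trans _ _ (h a.+1 b)); [apply: (IH a.+1 b) | apply: (IH a b.+1)]; lia.
Qed.

End SegmentRecursion.

Section Network.
Variables (R : realFieldType) (T : finType).
Variables (lams : R) (lam0 : T -> R) (lamg : T -> T -> R).

(* The version age satisfies its defining equation: the fuel allotted to S
   exceeds by one the fuel allotted to every one-node enlargement of S. *)
Lemma version_ageE (S : {set T}) :
  version_age lams lam0 lamg S =
  (lams + \sum_(i in nbr lamg S) rate_into lamg S i * version_age lams lam0 lamg (i |: S)) /
  (\sum_(j in S) lam0 j + \sum_(i in nbr lamg S) rate_into lamg S i).
Proof.
rewrite /version_age [LHS]/=; congr ((_ + _) / _); apply: eq_bigr => i.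
rewrite inE => /andP[iS _]; congr (_ * age_fuel _ _ _ _ _).
have := max_card (i |: S); by rewrite cardsU1 iS add1n => /subnSK.
Qed.

Lemma sum_nbr_compl (S : {set T}) (G : T -> R) :
  (forall i j, 0 <= lamg i j) ->
  \sum_(i in nbr lamg S) rate_into lamg S i * G i =
  \sum_(i in ~: S) rate_into lamg S i * G i.
Proof.
move=> lamg_ge0; rewrite big_mkcond [RHS]big_mkcond; apply: eq_bigr => i _.
rewrite inE in_setC; case: (i \in S) => //=; case: ltP => // rate_le0.
have rate_ge0 : 0 <= rate_into lamg S i by apply: sumr_ge0.
have -> : rate_into lamg S i = 0 by apply/eqP; rewrite eq_le rate_le0 rate_ge0.
by rewrite mul0r.
Qed.
End Network.

Section LineSegments.
Variables (R : realFieldType) (m : nat) (lam : R).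

Definition segment (a b : nat) : {set 'I_m.+1} :=
  [set x : 'I_m.+1 | (a <= x) && (x + b <= m)]%N.

Lemma segment1 (x : 'I_m.+1) : [set x] = segment x (m - x).
Proof.
by apply/setP => y; rewrite !inE -val_eqE /=; have := ltn_ord x; have := ltn_ord y; lia.
Qed.

Lemma segment_extend_left a b : (0 < a)%N -> (a + b <= m)%N ->
  inord a.-1 \notin segment a b /\ inord a.-1 |: segment a b = segment a.-1 b.
Proof.
move=> a_gt0 ab_le; split; first by rewrite inE inordK; lia.
by apply/setP => x; rewrite !inE -val_eqE /= inordK; lia.
Qed.

Lemma segment_extend_right a b : (0 < b)%N -> (a + b <= m)%N ->
  inord (m - b).+1 \notin segment a b /\ inord (m - b).+1 |: segment a b = segment a b.-1.
Proof.
move=> b_gt0 ab_le; split; first by rewrite inE inordK; lia.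
by apply/setP => x; rewrite !inE -val_eqE /= inordK; lia.
Qed.

Lemma card_segment a b : (a + b <= m)%N -> #|segment a b| = (m.+1 - (a + b))%N.
Proof.
elim: a => [|a IHa] ab_le.
  elim: b ab_le => [|b IHb] b_le.
    have -> : segment 0 0 = setT.
      by apply/setP => x; rewrite !inE; have := ltn_ord x; lia.
    by rewrite cardsT card_ord.
  have [notin ext] := @segment_extend_right 0 b.+1 isT b_le.
  have := cardsU1 (inord (m - b.+1).+1) (segment 0 b.+1).
  rewrite ext notin /= IHb; last by lia.
  by move=> card_eq; apply: (@addnI 1); rewrite -card_eq; lia.
have [notin ext] := @segment_extend_left a.+1 b isT ab_le.
have := cardsU1 (inord a) (segment a.+1 b).
rewrite ext notin /= IHa; last by lia.
by move=> card_eq; apply: (@addnI 1); rewrite -card_eq; lia.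
Qed.

Lemma sum_pick (A : {set 'I_m.+1}) (u : R) (G : 'I_m.+1 -> R) (x : nat) :
  (x <= m)%N -> inord x \in A ->
  \sum_(i in A) (if (i : nat) == x then u else 0) * G i = u * G (inord x).
Proof.
move=> x_le xA; rewrite (bigD1 (inord x)) //= inordK // eqxx big1 ?addr0 //.
move=> i /andP[_ i_neq]; rewrite ifF ?mul0r //; apply: contraNF i_neq => /eqP i_eq.
by apply/eqP/val_inj; rewrite /= inordK.
Qed.

Lemma rate_into_segment a b (i : 'I_m.+1) : (a + b <= m)%N -> i \notin segment a b ->
  rate_into (line_lamg lam) (segment a b) i =
  (if (i : nat).+1 == a then lam / 2 else 0) + (if (i : nat) == (m - b).+1 then lam / 2 else 0).
Proof.
move=> ab_le; rewrite inE => i_out.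
rewrite /rate_into (eq_bigr (fun j : 'I_m.+1 =>
   (if (j : nat) == a then (if (i : nat).+1 == a then lam / 2 else 0) else 0) * 1 +
   (if (j : nat) == (m - b)%N then (if (i : nat) == (m - b).+1 then lam / 2 else 0) else 0) * 1)).
  by rewrite big_split /= !sum_pick ?inE ?inordK ?mulr1 //; lia.
move=> j; rewrite inE => j_in; rewrite !mulr1 /line_lamg.
by repeat case: ifP => ?; rewrite ?addr0 ?add0r //; exfalso; lia.
Qed.

Lemma line_lamg_ge0 (i j : 'I_m.+1) : 0 < lam -> 0 <= line_lamg lam i j.
Proof. by move=> lam_gt0; rewrite /line_lamg; case: ifP; rewrite // divr_ge0 // ltW. Qed.

Lemma sum_nbr_segment a b (G : 'I_m.+1 -> R) : 0 < lam -> (a + b <= m)%N ->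
  \sum_(i in nbr (line_lamg lam) (segment a b))
     rate_into (line_lamg lam) (segment a b) i * G i =
  (if (0 < a)%N then lam / 2 * G (inord a.-1) else 0) +
  (if (0 < b)%N then lam / 2 * G (inord (m - b).+1) else 0).
Proof.
move=> lam_gt0 ab_le; rewrite sum_nbr_compl => [|i j]; last exact: line_lamg_ge0.
rewrite (eq_bigr (fun i : 'I_m.+1 =>
   (if (i : nat).+1 == a then lam / 2 else 0) * G i +
   (if (i : nat) == (m - b).+1 then lam / 2 else 0) * G i)); last first.
  by move=> i; rewrite inE => i_out; rewrite rate_into_segment // mulrDl.
rewrite big_split /=; congr (_ + _).
  case: a ab_le => [|a] ab_le /=; first by rewrite big1 // => i _; rewrite mul0r.
  rewrite (eq_bigr (fun i : 'I_m.+1 => (if (i : nat) == a then lam / 2 else 0) * G i)) //.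
  by rewrite sum_pick // ?inE ?inordK //; lia.
case: b ab_le => [|b] ab_le /=.
  by rewrite big1 // => i _; rewrite subn0 ltn_eqF ?mul0r.
by rewrite sum_pick // ?inE ?inordK //; lia.
Qed.

Variables (n : nat) (lams : R).

Definition segment_age (a b : nat) : R :=
  version_age lams (line_lam0 n lam) (line_lamg lam) (segment a b).

Lemma segment_age_rec a b : (1 <= n)%N -> 0 < lam -> (a + b < m.+1)%N ->
  segment_age a b * out_rate m.+1 (lam / n%:R) (lam / 2) a b =
  lams + (if (0 < a)%N then lam / 2 * segment_age a.-1 b else 0)
       + (if (0 < b)%N then lam / 2 * segment_age a b.-1 else 0).
Proof.
move=> n_ge1 lam_gt0; rewrite ltnS => ab_le.
have c_gt0 : 0 < lam / n%:R by rewrite divr_gt0 // ltr0n.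
have w_gt0 : 0 < lam / 2 by rewrite divr_gt0.
have source_sum : \sum_(j in segment a b) line_lam0 n lam j = (m.+1 - (a + b))%:R * (lam / n%:R).
  by rewrite sumr_const card_segment // mulr_natl.
have gossip_sum : \sum_(i in nbr (line_lamg lam) (segment a b))
    rate_into (line_lamg lam) (segment a b) i =
    (if (0 < a)%N then lam / 2 else 0) + (if (0 < b)%N then lam / 2 else 0).
  under eq_bigr do rewrite -[rate_into _ _ _]mulr1.
  by rewrite sum_nbr_segment // !mulr1.
rewrite /segment_age version_ageE source_sum gossip_sum addrA -/(out_rate _ _ _ a b).
rewrite divfK ?lt0r_neq0 ?out_rate_gt0 // sum_nbr_segment // addrA.
clear source_sum gossip_sum; congr (_ + _ + _).
  case: a ab_le => [|a] ab_le //=.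
  by have [_ ->] := @segment_extend_left a.+1 b isT ab_le.
case: b ab_le => [|b] ab_le //=.
by have [_ ->] := @segment_extend_right a b.+1 isT ab_le.
Qed.

Lemma line_age_segment (x : 'I_m.+1) : line_age n lams lam x = segment_age x (m - x).
Proof. by rewrite /line_age segment1. Qed.
End LineSegments.

(* a : 'I_n0 is node i = a+1, b is node i+1; 1 <= i <= n0/2 iff 2*(a+1) <= n0. *)
Theorem theorem1 (R : realFieldType) (n n0 : nat) (lams lam : R)
  (hn : (1 <= n)%N) (hlams : 0 < lams) (hlam : 0 < lam) (hn0 : (2 <= n0)%N)
  (a b : 'I_n0) (hab : nat_of_ord b = (nat_of_ord a).+1)
  (hi : (2 * (nat_of_ord a).+1 <= n0)%N) :
  line_age n lams lam b <= line_age n lams lam a.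
Proof.
case: n0 hn0 a b hab hi => [|m] // _ a b hab hi.
have c_gt0 : 0 < lam / n%:R by rewrite divr_gt0 // ltr0n.
have w_gt0 : 0 < lam / 2 by rewrite divr_gt0.
have a_le : (a < m - a)%N by lia.
rewrite !line_age_segment hab subnS.
have rec a' b' := @segment_age_rec R m lam n lams a' b' hn hlam.
by apply: (h_center c_gt0 w_gt0 hlams rec a_le); lia.
Qed.
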